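(* Let $N\ge 0$. Given infinite vectors $U_1,\dots,U_{N+1}$ and $I$ with entries in $M$, there exist unique infinite vectors $U'_1,\dots,U'_{N+1}$ and $I'$ with entries in $M$ such that $$F_{N+1}(U'_{N+1})\cdots F_2(U'_2)F_1(U'_1)E(I)=E(I')F_{N+1}(U_{N+1})\cdots F_2(U_2)F_1(U_1).$$ Moreover, the resulting map $(U_i,I)\mapsto(U'_i,I')$ is expressed by subtraction-free rational expressions (terms built from $+,\cdot,{}^{-1},1$).
   Context: $M$ is the semifield of germs at $\epsilon=0$ of continuous positive functions $f(\epsilon)$, $\epsilon>0$, with $\lim_{\epsilon\to+0}\epsilon\log f(\epsilon)\in\mathbb{R}$, with usual addition, multiplication and multiplicative inverse. For an infinite vector $I=(I_1,I_2,\dots)$, $E(I)$ is the infinite upper bidiagonal matrix with $I_1,I_2,\dots$ on the diagonal and $1$ on the superdiagonal. For an infinite vector $V=(V_1,V_2,\dots)$, $F(V)$ is the infinite lower bidiagonal matrix with $1$ on the diagonal and $-V_1,-V_2,\dots$ on the subdiagonal, and $F_k(V)=\mathrm{diag}(\mathrm{Id}_{k-1},F(V))$. *)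

From HB Require Import structures.
From mathcomp Require Import all_boot all_order all_algebra.
From mathcomp Require Import all_classical all_reals all_analysis.
Set Implicit Arguments. Unset Strict Implicit. Unset Printing Implicit Defensive.
Import Order.TTheory GRing.Theory Num.Theory.
Import numFieldNormedType.Exports.
Local Open Scope ring_scope.
Local Open Scope classical_set_scope.

Section Defs.
Variable R : realType.

(** Elements of the semifield M are represented by functions f : R -> R
    (only the values for small epsilon > 0 matter); [inM f] says f is
    (a representative of) an element of M. *)
Definition inM (f : R -> R) : Prop :=
  exists2 d : R, 0 < d &
    [/\ (forall e, 0 < e < d -> 0 < f e),
        {within `]0, d[, continuous f} &
        exists l : R, (fun e => e * ln (f e)) @ 0^'+ --> l].

Definition germ_eq (f g : R -> R) : Prop := \forall e \near 0^'+, f e = g e.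

(** Infinite matrices with germ (function) entries, indexed by nat x nat
    (index 0 corresponds to the paper's index 1). *)
Definition imx := nat -> nat -> R -> R.

(** The sum runs over k <= i+1; this is the exact
    (finite) matrix product whenever the left factor A is zero beyond the
    superdiagonal (A i k = 0 for k > i+1), which holds for every left factor
    used below (products of lower bidiagonal F_k's, and E). *)
Definition imul (A B : imx) : imx :=
  fun i j e => \sum_(k < i.+2) A i k e * B k j e.

Definition imx1 : imx := fun i j _ => if i == j then 1 else 0.

Definition Emx (I : nat -> R -> R) : imx :=
  fun i j e => if j == i then I i e else if j == i.+1 then 1 else 0.

(** F_{a+1}(V) = diag(Id_a, F(V)), F(V) lower bidiagonal with 1 on the
    diagonal and -V_1, -V_2, ... on the subdiagonal. *)
Definition Fkmx (a : nat) (V : nat -> R -> R) : imx :=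
  fun i j e => if i == j then 1
               else if (i == j.+1) && (a <= j)%N then - V (j - a)%N e else 0.

(** F_{N+1}(U_{N+1}) * ... * F_2(U_2) * F_1(U_1)  (U a = U_{a+1}). *)
Definition Fprod (N : nat) (U : 'I_N.+1 -> nat -> R -> R) : imx :=
  \big[imul/imx1]_(i < N.+1) Fkmx (rev_ord i) (U (rev_ord i)).

Definition imx_germ_eq (A B : imx) : Prop := forall i j, germ_eq (A i j) (B i j).

End Defs.

Inductive sfexpr (V : Type) : Type :=
  | SVar of V
  | SOne
  | SAdd of sfexpr V & sfexpr V
  | SMul of sfexpr V & sfexpr V
  | SInv of sfexpr V.

Fixpoint sfeval (R : realType) (V : Type) (env : V -> R -> R) (t : sfexpr V)
  : R -> R :=
  match t with
  | SVar v => env v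
  | SOne => fun _ => 1
  | SAdd s u => fun e => sfeval env s e + sfeval env u e
  | SMul s u => fun e => sfeval env s e * sfeval env u e
  | SInv s => fun e => (sfeval env s e)^-1
  end.

(** Variables: (inl (a, k)) = k-th entry (0-based) of U_{a+1};
    (inr k) = k-th entry (0-based) of I. *)
Definition pvar (N : nat) : Type := (('I_N.+1 * nat) + nat)%type.

Definition penv (R : realType) (N : nat) (U : 'I_N.+1 -> nat -> R -> R)
  (I : nat -> R -> R) : pvar N -> R -> R :=
  fun v => match v with inl (a, k) => U a k | inr k => I k end.

Definition is_solution (R : realType) (N : nat)
  (U : 'I_N.+1 -> nat -> R -> R) (I : nat -> R -> R)
  (U' : 'I_N.+1 -> nat -> R -> R) (I' : nat -> R -> R) : Prop :=
  [/\ (forall a k, inM (U' a k)), (forall k, inM (I' k)) &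
      imx_germ_eq (imul (Fprod U') (Emx I)) (imul (Emx I') (Fprod U))].

From HB Require Import structures.
From mathcomp Require Import all_boot all_order all_algebra.
From mathcomp Require Import all_classical all_reals all_analysis.
From mathcomp Require Import zify ring lra.
Set Implicit Arguments. Unset Strict Implicit. Unset Printing Implicit Defensive.
Import Order.TTheory GRing.Theory Num.Theory.
Import numFieldNormedType.Exports.
Local Open Scope ring_scope.
Local Open Scope classical_set_scope.

(** Moving [E(I)] leftwards through a single factor is the local move
    [F_(a+1)(X) E(J) = E(K) F_(a+1)(V)]: comparing the entries [(i, i)] and
    [(i, i-1)] determines [K] and [X] by subtraction-free rational formulas in
    [J] and [V].  Pushing [E(I)] through [F_1], ..., [F_(N+1)] in turn gives the
    solution, and it stays in [M] because [M] is closed under [1], [*], [^-1]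
    and [+].

    Uniqueness comes from positivity.  A product of [F]'s with nonnegative
    parameters has a checkerboard sign pattern, so in row [i] the difference
    of two solutions obeys a recurrence with alternating right-hand side; this
    forces [I'_i] and row [i] of the product to agree.  The factors are then
    recovered one at a time from the product, dividing by its lowest diagonal
    [(-1)^n prod_k U_k(m)], which does not vanish. *)

Section Semifield.
Variable R : realType.
Implicit Types f g : R -> R.

Lemma near0_itv (d : R) : 0 < d -> \forall e \near 0^'+, 0 < e < d.
Proof.
move=> d0; near=> e; apply/andP; split; near: e; [exact: nbhs_right_gt|exact: nbhs_right_lt].
Unshelve. all: by end_near.
Qed.

Lemma within_oo_continuousP f (d : R) :
  {within `]0, d[, continuous f} <-> forall x, 0 < x < d -> {for x, continuous f}.
Proof.
rewrite continuous_open_subspace; last exact: itv_open.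
by split=> h x; rewrite ?inE /= ?in_itv /= => xd; apply: h; rewrite ?inE /= ?in_itv.
Qed.

Lemma inMP f : inM f <->
  (\forall e \near 0^'+, 0 < f e /\ {for e, continuous f}) /\
  exists l : R, (fun e => e * ln (f e)) @ 0^'+ --> l.
Proof.
split=> [[d d0 [pos cont lim]]|[Pf lim]].
  split=> //; apply: filterS (near0_itv d0) => e ed.
  by split; [exact: pos|exact: (within_oo_continuousP f d).1].
move: Pf; rewrite /at_right /within => /nbhs_ballP[d /= d0 near_f].
have {}near_f e : 0 < e < d -> 0 < f e /\ {for e, continuous f}.
  case/andP=> e0 ed; apply: (near_f e) => //.
  by rewrite /ball /= sub0r normrN gtr0_norm.
exists d => //; split=> //; first by move=> e /near_f[].
by apply/within_oo_continuousP => e /near_f[].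
Qed.

Lemma inM_gt0 f : inM f -> \forall e \near 0^'+, 0 < f e.
Proof. by case/inMP=> pos _; apply: filterS pos => e []. Qed.

Lemma inM1 : inM (fun _ : R => 1).
Proof.
apply/inMP; split; first by apply: nearW => e; split; [exact: ltr01|exact: cst_continuous].
exists 0; rewrite (_ : (fun e : R => e * ln 1) = fun=> 0); first exact: cvg_cst.
by apply: funext => e; rewrite ln1 mulr0.
Qed.

Lemma inM_mul f g : inM f -> inM g -> inM (fun e => f e * g e).
Proof.
move=> /inMP[Pf [l1 L1]] /inMP[Pg [l2 L2]]; apply/inMP; split.
  by apply: filterS2 Pf Pg => e [f0 cf] [g0 cg]; split; [exact: mulr_gt0|exact: continuousM].
exists (l1 + l2); apply: cvg_trans (cvgD L1 L2); apply: near_eq_cvg.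
apply: filterS2 Pf Pg => e [f0 _] [g0 _].
by rewrite /= lnM ?posrE // mulrDr.
Qed.

Lemma inM_inv f : inM f -> inM (fun e => (f e)^-1).
Proof.
move=> /inMP[Pf [l L]]; apply/inMP; split.
  apply: filterS Pf => e [f0 cf]; split; first by rewrite invr_gt0.
  by apply: continuousV; rewrite ?gt_eqF.
exists (- l); apply: cvg_trans (cvgN L); apply: near_eq_cvg.
by apply: filterS Pf => e [f0 _]; rewrite /= lnV ?posrE // mulrN.
Qed.

Lemma cvg_max (F : set_system R) {FF : Filter F} (u v : R -> R) l1 l2 :
  u @ F --> l1 -> v @ F --> l2 -> (fun e => Num.max (u e) (v e)) @ F --> Num.max l1 l2.
Proof.
move=> U V; apply: (@continuous2_cvg R R R R _ FF u v (fun x y => Num.max x y)) => //.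
exact: (@max_continuous _ R (l1, l2)).
Qed.

Lemma ln_add_max (x y : R) : 0 < x -> 0 < y ->
  Num.max (ln x) (ln y) <= ln (x + y) <= ln 2 + Num.max (ln x) (ln y).
Proof.
move=> x0 y0; have xy0 : 0 < x + y by rewrite addr_gt0.
rewrite ge_max ler_ln ?posrE // ler_ln ?posrE // lerDl lerDr (ltW x0) (ltW y0) /=.
wlog xy : x y x0 y0 xy0 / x <= y.
  move=> wlog_xy; have [|/ltW] := leP x y; first exact: wlog_xy.
  by rewrite addrC maxC; apply: wlog_xy; rewrite // addrC.
rewrite max_r; last by rewrite ler_ln ?posrE.
rewrite -lnM ?posrE // ler_ln ?posrE ?mulr_gt0 //.
by rewrite mulr2n mulrDl mul1r lerD2r.
Qed.

(** [e ln (f + g)] is squeezed between [max (e ln f) (e ln g)] and that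
    maximum plus [e ln 2], and [e ln 2] vanishes at [0]. *)
Lemma inM_add f g : inM f -> inM g -> inM (fun e => f e + g e).
Proof.
move=> /inMP[Pf [l1 L1]] /inMP[Pg [l2 L2]]; apply/inMP; split.
  by apply: filterS2 Pf Pg => e [f0 cf] [g0 cg]; split; [exact: addr_gt0|exact: continuousD].
exists (Num.max l1 l2).
have Lmax : (fun e => Num.max (e * ln (f e)) (e * ln (g e))) @ 0^'+ --> Num.max l1 l2.
  exact: cvg_max.
have Lup : (fun e => e * ln 2 + Num.max (e * ln (f e)) (e * ln (g e))) @ 0^'+
    --> Num.max l1 l2.
  have L0 : (fun e : R => e * ln 2) @ 0^'+ --> 0.
    rewrite -[X in _ --> X](mul0r (ln 2)); apply: cvgMr_tmp.
    by apply: cvg_at_right_filter; exact: cvg_id.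
  rewrite -[X in _ --> X]add0r.
  by apply: cvgD; [exact: L0|exact: Lmax].
apply: squeeze_cvgr Lmax Lup; near=> e.
have e0 : 0 < e by near: e; exact: nbhs_right_gt.
have e_ge0 := ltW e0.
have f0 : 0 < f e by near: e; apply: filterS Pf => x [].
have g0 : 0 < g e by near: e; apply: filterS Pg => x [].
by rewrite -!maxr_pMr // -mulrDr !ler_pM2l //; exact: ln_add_max.
Unshelve. all: by end_near.
Qed.

Lemma inM_sfeval (V : Type) (env : V -> R -> R) (t : sfexpr V) :
  (forall v, inM (env v)) -> inM (sfeval env t).
Proof.
move=> henv; elim: t => [v| |s hs u hu|s hs u hu|s hs] /=.
- exact: henv.
- exact: inM1.
- exact: inM_add.
- exact: inM_mul.
- exact: inM_inv.
Qed.

End Semifield.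

Lemma near_forall_lt {T : Type} (F : set_system T) {FF : Filter F}
    (P : nat -> T -> Prop) n :
  (forall k, (k < n)%N -> \forall x \near F, P k x) ->
  \forall x \near F, forall k, (k < n)%N -> P k x.
Proof.
move=> near_P.
apply: filterS (@filter_forall T 'I_n (fun k => P k) F FF (fun k => near_P k (ltn_ord k))).
by move=> x Px k kn; exact: (Px (Ordinal kn)).
Qed.

Section InfiniteMatrices.
Variable R : realType.
Implicit Types (A B C : imx R) (I J K : nat -> R -> R) (f : nat -> R -> R).

Definition trig_imx A := forall i k e, (i < k)%N -> A i k e = 0.

(** Lower Hessenberg: for such [A] the truncated sum in [imul A B] is the
    exact product. *)
Definition hessenberg_imx A := forall i k e, (i.+1 < k)%N -> A i k e = 0.

Definition Lmx f : imx R :=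
  fun i j e => if i == j then 1 else if i == j.+1 then f j e else 0.

Lemma trig_hessenberg A : trig_imx A -> hessenberg_imx A.
Proof. by move=> tA i k e ik; apply: tA; exact: ltnW. Qed.

Lemma imx1_trig : trig_imx (@imx1 R).
Proof. by move=> i k e ik; rewrite /imx1 ltn_eqF. Qed.

Lemma Lmx_trig f : trig_imx (Lmx f).
Proof. by move=> i k e ik; rewrite /Lmx (ltn_eqF ik) (ltn_eqF (ltn_trans ik (ltnSn k))). Qed.

Lemma Emx_hessenberg I : hessenberg_imx (Emx I).
Proof. by move=> i k e ik; rewrite /Emx (gtn_eqF ik) (gtn_eqF (ltnW ik)). Qed.

Definition Fsub a V : nat -> R -> R := fun j e => if (a <= j)%N then - V (j - a)%N e else 0.

Lemma Fkmx_Lmx a V : Fkmx a V = Lmx (Fsub a V).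
Proof.
apply: funext => i; apply: funext => j; apply: funext => e; rewrite /Fkmx /Lmx /Fsub.
by case: (i == j) => //; case: (i == j.+1); case: (a <= j)%N.
Qed.

Lemma Fkmx_trig a V : trig_imx (Fkmx a V).
Proof. by rewrite Fkmx_Lmx; exact: Lmx_trig. Qed.

Lemma imul_widen A B n i j e : hessenberg_imx A -> (i.+2 <= n)%N ->
  imul A B i j e = \sum_(k < n) A i k e * B k j e.
Proof.
move=> hA hn; rewrite /imul (big_ord_widen _ (fun k => A i k e * B k j e) hn) big_mkcond.
by apply: eq_bigr => k _; case: ltnP => // ik; rewrite hA ?mul0r.
Qed.

Lemma hessenberg_imul A B : hessenberg_imx A -> hessenberg_imx B ->
  trig_imx A \/ trig_imx B -> hessenberg_imx (imul A B).
Proof.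
move=> hA hB hAB i l e il; rewrite /imul; apply: big1 => k _; have ki2 := ltn_ord k.
have [ik|ki] := ltnP i k; last by rewrite hB ?mulr0 //; lia.
case: hAB => [tA|tB]; first by rewrite tA ?mul0r.
by rewrite tB ?mulr0 //; lia.
Qed.

Lemma imulA A B C : hessenberg_imx A -> hessenberg_imx B ->
  trig_imx A \/ trig_imx B -> imul A (imul B C) = imul (imul A B) C.
Proof.
move=> hA hB hAB; apply: funext => i; apply: funext => j; apply: funext => e.
transitivity (\sum_(k < i.+2) \sum_(l < i.+3) A i k e * B k l e * C l j e).
  apply: eq_bigr => k _; rewrite (imul_widen _ _ _ hB (ltn_ord k : (k.+2 <= i.+3)%N)) mulr_sumr.
  by apply: eq_bigr => l _; rewrite mulrA.
rewrite (imul_widen _ _ _ (hessenberg_imul hA hB hAB) (leqnSn i.+2)) exchange_big.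
by apply: eq_bigr => l _; rewrite /imul mulr_suml.
Qed.

Lemma imul1mx A : imul (@imx1 R) A = A.
Proof.
apply: funext => i; apply: funext => j; apply: funext => e.
rewrite /imul (eq_bigr (fun k : 'I_i.+2 => if (k : nat) == i then A k j e else 0)).
  by rewrite -big_mkcond (big_ord1_eq _ (fun k => A k j e)) ltnW.
by move=> k _; rewrite /imx1 eq_sym; case: eqP; rewrite ?mul1r ?mul0r.
Qed.

Lemma imulmx1 A : hessenberg_imx A -> imul A (@imx1 R) = A.
Proof.
move=> hA; apply: funext => i; apply: funext => j; apply: funext => e.
rewrite /imul (eq_bigr (fun k : 'I_i.+2 => if (k : nat) == j then A i k e else 0)).
  by rewrite -big_mkcond (big_ord1_eq _ (fun k => A i k e)); case: ltnP => // ij; rewrite hA.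
by move=> k _; rewrite /imx1; case: eqP; rewrite ?mulr1 ?mulr0.
Qed.

Lemma imul_Emxl K A i j e : imul (Emx K) A i j e = K i e * A i j e + A i.+1 j e.
Proof.
rewrite /imul !big_ord_recr big1 /= => [|k _]; last first.
  have ki := ltn_ord k; rewrite /Emx (ltn_eqF ki).
  by rewrite (ltn_eqF (ltn_trans ki (ltnSn i))) mul0r.
by rewrite /Emx !eqxx gtn_eqF // add0r mul1r.
Qed.

Lemma imul_Emxr A J i j e : hessenberg_imx A ->
  imul A (Emx J) i j e = A i j e * J j e + (if j is j'.+1 then A i j' e else 0).
Proof.
move=> hA; rewrite /imul (eq_bigr (fun k : 'I_i.+2 =>
  (if (k : nat) == j then A i k e * J j e else 0) +
  (if k.+1 == j then A i k e else 0))); last first.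
  move=> k _; rewrite /Emx eq_sym; case: eqP => [->|_].
    by rewrite (gtn_eqF (ltnSn _)) addr0.
  by rewrite eq_sym add0r; case: eqP; rewrite ?mulr1 ?mulr0.
rewrite big_split /= -big_mkcond -big_mkcond (big_ord1_eq _ (fun k => A i k e * J j e)).
have -> : (if (j < i.+2)%N then A i j e * J j e else 0) = A i j e * J j e.
  by case: ltnP => // ij; rewrite hA ?mul0r.
case: j => [|j]; first by rewrite big_pred0.
by rewrite (big_ord1_eq _ (fun k => A i k e)); case: ltnP => // ij; rewrite (hA i j).
Qed.

Lemma imul_Lmxl f Q i j e :
  imul (Lmx f) Q i j e = Q i j e + (if i is i'.+1 then f i' e * Q i' j e else 0).
Proof.
rewrite /imul !big_ord_recr /= /Lmx eqxx (ltn_eqF (ltnSn i)) (ltn_eqF (ltnW (ltnSn i.+1))).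
rewrite mul0r addr0 mul1r addrC; congr (_ + _).
case: i => [|i]; first by rewrite big_ord0.
rewrite big_ord_recr big1 /= => [|k _]; last first.
  have ki := ltn_ord k.
  by rewrite (gtn_eqF (ltn_trans ki (ltnSn i))) (gtn_eqF (ki : (k.+1 < i.+1)%N)) mul0r.
by rewrite add0r (gtn_eqF (ltnSn i)) eqxx.
Qed.

Lemma imx_germ_eq_trans A B C : imx_germ_eq A B -> imx_germ_eq B C -> imx_germ_eq A C.
Proof. by move=> AB BC i j; apply: filterS2 (AB i j) (BC i j) => e ->. Qed.

Lemma imx_germ_eq_imull A A' B : imx_germ_eq A A' -> imx_germ_eq (imul A B) (imul A' B).
Proof.
move=> AA' i j; apply: filterS (near_forall_lt (F := (0:R)^'+) (fun k _ => AA' i k)) => e AA'e.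
by apply: eq_bigr => k _; rewrite AA'e.
Qed.

Lemma imx_germ_eq_imulr A B B' : imx_germ_eq B B' -> imx_germ_eq (imul A B) (imul A B').
Proof.
move=> BB' i j; apply: filterS (near_forall_lt (F := (0:R)^'+) (fun k _ => BB' k j)) => e BB'e.
by apply: eq_bigr => k _; rewrite BB'e.
Qed.

End InfiniteMatrices.

Section ProductsOfF.
Variable R : realType.
Implicit Types (U W X Y : nat -> nat -> R -> R).

(** [F_n(U_(n-1)) ... F_1(U_0)]: the factor [F_(k+1)] carries [U k], as in [Fprod]. *)
Fixpoint Fchain n U : imx R :=
  if n is n'.+1 then imul (Fkmx n' (U n')) (Fchain n' U) else @imx1 R.

Lemma Fchain_big n U :
  Fchain n U = \big[@imul R/@imx1 R]_(i < n) Fkmx (n - i.+1) (U (n - i.+1)%N).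
Proof.
elim: n => [|n IHn]; first by rewrite big_ord0.
by rewrite big_ord_recl /= subn1 IHn; congr (imul _ _); apply: eq_bigr => i _; rewrite subSS.
Qed.

Lemma Fprod_Fchain N (U : 'I_N.+1 -> nat -> R -> R) :
  Fprod U = Fchain N.+1 (fun k => U (inord k)).
Proof.
rewrite Fchain_big /Fprod; apply: eq_bigr => i _.
by congr (Fkmx _ (U _)); apply: val_inj; rewrite /= inordK // subSS ltnS leq_subr.
Qed.

Lemma eq_Fchain n U W : (forall k, (k < n)%N -> U k = W k) -> Fchain n U = Fchain n W.
Proof.
elim: n => [|n IHn] eqUW //=.
by rewrite eqUW // IHn // => k kn; apply: eqUW; exact: ltnW.
Qed.

Lemma FchainSE n U i j e : Fchain n.+1 U i j e =
  Fchain n U i j e - (if (n < i)%N then U n (i.-1 - n)%N e * Fchain n U i.-1 j e else 0).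
Proof.
rewrite /= Fkmx_Lmx imul_Lmxl /Fsub; case: i => [|i] /=; first by rewrite addr0 subr0.
have -> : (n < i.+1)%N = (n <= i)%N by [].
by case: leqP => _; rewrite ?mulNr ?mul0r ?addr0 ?subr0.
Qed.

Lemma Fchain_trig n U : trig_imx (Fchain n U).
Proof.
elim: n => [|n IHn] i j e ij; first exact: imx1_trig.
rewrite FchainSE IHn //; case: ifP => _; last by rewrite subr0.
by rewrite IHn ?mulr0 ?subr0 //; exact: leq_ltn_trans (leq_pred i) ij.
Qed.

Lemma Fchain_hessenberg n U : hessenberg_imx (Fchain n U).
Proof. exact/trig_hessenberg/Fchain_trig. Qed.

Lemma Fchain_diag n U i e : Fchain n U i i e = 1.
Proof.
elim: n => [|n IHn]; first by rewrite /= /imx1 eqxx.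
rewrite FchainSE IHn; case: ifP => [ni|_]; last by rewrite subr0.
by rewrite Fchain_trig ?mulr0 ?subr0 // ltn_predL; exact: leq_ltn_trans ni.
Qed.

Lemma Fchain_band n U i j e : (j + n < i)%N -> Fchain n U i j e = 0.
Proof.
elim: n i => [|n IHn] i jni; first by rewrite /= /imx1 gtn_eqF // -(addn0 j).
rewrite FchainSE IHn; last by lia.
case: ifP => [ni|_]; last by rewrite subr0.
by rewrite IHn ?mulr0 ?subr0 //; lia.
Qed.

Lemma Fchain_corner n U m e :
  Fchain n U (m + n)%N m e = (-1) ^+ n * \prod_(k < n) U k m e.
Proof.
elim: n => [|n IHn]; first by rewrite addn0 Fchain_diag big_ord0 mulr1.
rewrite FchainSE Fchain_band; last by lia.
rewrite ltn_addl // addnS /= addnK IHn big_ord_recr /= exprS.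
by ring.
Qed.

Lemma Fchain_sign n U i j e : (forall k m, (k < n)%N -> (m < i)%N -> 0 <= U k m e) ->
  (j <= i)%N -> 0 <= (-1) ^+ (i - j) * Fchain n U i j e.
Proof.
elim: n i => [|n IHn] i U_ge0 ji.
  by rewrite /= /imx1; case: eqP => [->|_]; rewrite ?subnn ?mulr1 ?mulr0.
have U_ge0' i' : (i' <= i)%N -> forall k m, (k < n)%N -> (m < i')%N -> 0 <= U k m e.
  by move=> ii' k m kn mi'; apply: U_ge0; [exact: ltnW|exact: leq_trans mi' ii'].
rewrite FchainSE; case: ifP => [ni|_]; last by rewrite subr0; exact: IHn (U_ge0' i (leqnn i)) ji.
case: (eqVneq j i) => [->|ji'].
  rewrite (@Fchain_trig n U i.-1 i e); last by rewrite ltn_predL; lia.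
  by rewrite mulr0 subr0 Fchain_diag subnn mulr1.
have ji1 : (j <= i.-1)%N by lia.
have Es : (-1) ^+ (i.-1 - j) = - (-1) ^+ (i - j) :> R.
  by rewrite (_ : i - j = (i.-1 - j).+1)%N ?exprS ?mulN1r ?opprK //; lia.
rewrite mulrBr mulrCA -mulrN -mulNr -Es; apply: addr_ge0.
  exact: IHn (U_ge0' i (leqnn i)) ji.
apply: mulr_ge0; first by apply: U_ge0; lia.
exact: IHn (U_ge0' _ (leq_pred i)) ji1.
Qed.

End ProductsOfF.

Section Exchange.
Variable R : realType.
Implicit Types (A B C : imx R) (I J V : nat -> R -> R) (U : nat -> nat -> R -> R).

(** Solving the entries [(i, i)] and [(i, i-1)] of
    [F_(a+1)(X) E(J) = E(K) F_(a+1)(V)] for [K] and [X]. *)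
Definition exchE a J V : nat -> R -> R := fun i e =>
  if (i < a)%N then J i e else if i == a then J a e + V 0%N e
  else (J i e + V (i - a)%N e) * J i.-1 e / (J i.-1 e + V (i.-1 - a)%N e).

Definition exchF a J V : nat -> R -> R := fun m e =>
  (J (a + m)%N.+1 e + V m.+1 e) * V m e / (J (a + m)%N e + V m e).

Lemma inM_exchE a J V : (forall m, inM (J m)) -> (forall m, inM (V m)) ->
  forall i, inM (exchE a J V i).
Proof.
move=> hJ hV i; rewrite /exchE; case: (i < a)%N; first exact: hJ.
case: (i == a); first exact: inM_add.
by apply: inM_mul; [apply: inM_mul|apply: inM_inv]; rewrite //; apply: inM_add.
Qed.

Lemma inM_exchF a J V : (forall m, inM (J m)) -> (forall m, inM (V m)) ->
  forall m, inM (exchF a J V m).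
Proof.
move=> hJ hV m; rewrite /exchF.
by apply: inM_mul; [apply: inM_mul|apply: inM_inv]; rewrite //; apply: inM_add.
Qed.

Lemma exchange_diag a J V i e : (forall m, (m <= i)%N -> 0 < J m e /\ 0 < V m e) ->
  J i e + (if i is i'.+1 then Fsub a (exchF a J V) i' e else 0) =
  exchE a J V i e + Fsub a V i e.
Proof.
move=> pos; rewrite /Fsub /exchE.
case: (ltngtP i a) => [ia|ai|<-].
- rewrite addr0; case: i ia {pos} => [|i] ia; first by rewrite addr0.
  have -> : (a <= i)%N = false by lia.
  by rewrite addr0.
- case: i ai pos => // i ai pos; rewrite ltnS in ai.
  rewrite ai /exchF (subnKC ai) (subSn ai) /=.
  have Ji : 0 < J i e by apply: (pos i _).1; lia.
  have Vm : 0 < V (i - a)%N e by apply: (pos _ _).2; lia.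
  have D : J i e + V (i - a)%N e != 0 by rewrite gt_eqF ?addr_gt0.
  by field.
- rewrite subnn addrK.
  by case: i {pos} => [|i]; rewrite ?ltnn addr0.
Qed.

Lemma exchange_subdiag a J V i e : (forall m, (m <= i)%N -> 0 < J m e /\ 0 < V m e) ->
  Fsub a (exchF a J V) i e * J i e = exchE a J V i.+1 e * Fsub a V i e.
Proof.
move=> pos; rewrite /Fsub; case: leqP => ai; last by rewrite mul0r mulr0.
rewrite /exchE /exchF.
have -> : (i.+1 < a)%N = false by lia.
have -> : (i.+1 == a) = false by lia.
rewrite (subnKC ai) (subSn ai) /=.
have Ji : 0 < J i e by apply: (pos i _).1.
have Vm : 0 < V (i - a)%N e by apply: (pos _ _).2; lia.
have D : J i e + V (i - a)%N e != 0 by rewrite gt_eqF ?addr_gt0.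
by field.
Qed.

Lemma exchange_Fkmx_Emx_entry a J V i j e :
  (forall m, (m <= i)%N -> 0 < J m e /\ 0 < V m e) ->
  imul (Fkmx a (exchF a J V)) (Emx J) i j e = imul (Emx (exchE a J V)) (Fkmx a V) i j e.
Proof.
move=> pos; rewrite !Fkmx_Lmx imul_Lmxl imul_Emxl /Emx /Lmx.
case: i pos => [|i] pos.
  case: j => [|[|j]] /=; last by rewrite mulr0 !addr0.
  - by rewrite mulr1; exact: (exchange_diag a pos).
  - by rewrite mulr0 addr0 add0r.
rewrite !eqSS; case: (eqVneq j i) => [->|ji].
  rewrite (ltn_eqF (ltnSn i)) (ltn_eqF (leqW (ltnSn i))) !(gtn_eqF (ltnSn i)).
  rewrite (gtn_eqF (leqW (ltnSn i))) add0r addr0.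
  by apply: exchange_subdiag => m mi; apply: pos; exact: leqW.
case: (eqVneq j i.+1) => [->|ji1].
  rewrite (gtn_eqF (ltnSn _)) !mulr1.
  exact: (exchange_diag a pos).
by rewrite !mulr0 addr0 add0r eq_sym.
Qed.

Lemma exchange_Fkmx_Emx a J V : (forall m, inM (J m)) -> (forall m, inM (V m)) ->
  imx_germ_eq (imul (Fkmx a (exchF a J V)) (Emx J)) (imul (Emx (exchE a J V)) (Fkmx a V)).
Proof.
move=> hJ hV i j.
have pos m : (m < i.+1)%N -> \forall e \near 0^'+, 0 < J m e /\ 0 < V m e.
  by move=> _; apply: filterS2 (inM_gt0 (hJ m)) (inM_gt0 (hV m)) => e.
by apply: filterS (near_forall_lt (F := (0:R)^'+) pos) => e pos_e; exact: exchange_Fkmx_Emx_entry.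
Qed.

(** [Ipush U I k] is the diagonal of [E] after moving it through the [k]
    rightmost factors, and [Upush U I k] the new parameter of [F_(k+1)]. *)
Fixpoint Ipush U I k : nat -> R -> R :=
  if k is k'.+1 then exchE k' (Ipush U I k') (U k') else I.

Definition Upush U I k := exchF k (Ipush U I k) (U k).

Lemma inM_Ipush U I : (forall k m, inM (U k m)) -> (forall m, inM (I m)) ->
  forall k m, inM (Ipush U I k m).
Proof. by move=> hU hI; elim=> [|k IHk] //=; exact: inM_exchE. Qed.

Lemma inM_Upush U I : (forall k m, inM (U k m)) -> (forall m, inM (I m)) ->
  forall k m, inM (Upush U I k m).
Proof. by move=> hU hI k; apply: inM_exchF => //; exact: inM_Ipush. Qed.

Lemma Fchain_Emx_push U I n : (forall k m, inM (U k m)) -> (forall m, inM (I m)) ->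
  imx_germ_eq (imul (Fchain n (Upush U I)) (Emx I)) (imul (Emx (Ipush U I n)) (Fchain n U)).
Proof.
move=> hU hI; elim: n => [|n IHn].
  by rewrite /= imul1mx imulmx1; [move=> i j; exact: nearW|exact: Emx_hessenberg].
have FkH k V : hessenberg_imx (Fkmx k V) by exact/trig_hessenberg/Fkmx_trig.
rewrite /= -(imulA _ (FkH _ _) (Fchain_hessenberg _ _) (or_introl (Fkmx_trig _ _))).
apply: imx_germ_eq_trans (imx_germ_eq_imulr _ IHn) _.
rewrite (imulA _ (FkH _ _) (Emx_hessenberg _) (or_introl (Fkmx_trig _ _))).
rewrite (imulA _ (Emx_hessenberg _) (FkH _ _) (or_intror (Fkmx_trig _ _))).
apply: imx_germ_eq_imull; apply: exchange_Fkmx_Emx => //; exact: inM_Ipush.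
Qed.

End Exchange.

Section Uniqueness.
Variable R : realType.
Implicit Types (W X Y : nat -> nat -> R -> R) (I : nat -> R -> R).

(** Inductively [z_j = d w_j] with [w_j] of the sign of [p_j]; at [j = i]
    this reads [d = d w_(i-1)] with [w_(i-1) <= 0], hence [d = 0]. *)
Lemma alternating_recurrence_eq0 i (z c p : nat -> R) (d : R) :
  (forall j, (j <= i)%N -> z j * c j + (if j is j'.+1 then z j' else 0) = d * p j) ->
  (forall j, (j <= i)%N -> 0 < c j) ->
  (forall j, (j <= i)%N -> 0 <= (-1) ^+ (i - j) * p j) ->
  z i = 0 -> p i = 1 -> d = 0 /\ forall j, (j <= i)%N -> z j = 0.
Proof.
move=> rec c_gt0 p_sign zi0 pi1.
have inv j : (j < i)%N -> exists2 w, z j = d * w & 0 <= (-1) ^+ (i - j) * w.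
  elim: j => [|j IHj] ji.
    have c0 : c 0%N != 0 by rewrite gt_eqF ?c_gt0.
    exists (p 0%N / c 0%N); last by rewrite mulrA divr_ge0 ?p_sign ?ltW ?c_gt0.
    by apply: (mulIf c0); rewrite mulrA divfK // -(rec 0%N) ?addr0.
  have [w zj sw] := IHj (ltnW ji).
  have c1 : c j.+1 != 0 by rewrite gt_eqF ?c_gt0 // ltnW.
  exists ((p j.+1 - w) / c j.+1).
    have := rec j.+1 (ltnW ji); rewrite /= zj => rj.
    by apply: (mulIf c1); rewrite mulrA divfK // mulrBr -rj addrK.
  have Es : (-1) ^+ (i - j) = - (-1) ^+ (i - j.+1) :> R.
    by rewrite (_ : i - j = (i - j.+1).+1)%N ?exprS ?mulN1r //; lia.
  rewrite mulrA; apply: divr_ge0; last by rewrite ltW // c_gt0 // ltnW.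
  rewrite mulrBr -mulNr -Es; apply: addr_ge0 => //; apply: p_sign; exact: ltnW.
have d0 : d = 0.
  move: (rec i (leqnn i)); rewrite zi0 pi1 mul0r add0r mulr1.
  case: i inv {rec c_gt0 p_sign zi0 pi1} => [|i] inv /=; first by move=> <-.
  have [w -> sw] := inv i (ltnSn i); move=> dw.
  rewrite subSnn expr1 mulN1r oppr_ge0 in sw.
  have : d * (1 - w) = 0 by rewrite mulrBr mulr1 dw subrr.
  move/eqP; rewrite mulf_eq0 subr_eq0 => /orP[/eqP //|/eqP w1].
  by move: sw; rewrite -w1 ler10.
split=> // j; rewrite leq_eqVlt => /orP[/eqP -> //|ji].
by have [w -> _] := inv j ji; rewrite d0 mul0r.
Qed.

Lemma Fchain_Emx_row_uniq n W X Y I I1 I2 i e :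
  (forall k m, (k < n)%N -> (m < i)%N -> 0 <= W k m e) ->
  (forall j, (j <= i)%N -> 0 < I j e) ->
  (forall j, (j <= i)%N ->
     imul (Fchain n X) (Emx I) i j e = imul (Emx I1) (Fchain n W) i j e) ->
  (forall j, (j <= i)%N ->
     imul (Fchain n Y) (Emx I) i j e = imul (Emx I2) (Fchain n W) i j e) ->
  I1 i e = I2 i e /\ forall j, Fchain n X i j e = Fchain n Y i j e.
Proof.
move=> W_ge0 I_gt0 eqX eqY.
pose z j := Fchain n X i j e - Fchain n Y i j e.
have rec j : (j <= i)%N -> z j * I j e + (if j is j'.+1 then z j' else 0) =
    (I1 i e - I2 i e) * Fchain n W i j e.
  move=> ji; move: (eqX j ji) (eqY j ji); rewrite !imul_Emxl.
  rewrite (imul_Emxr _ _ _ _ (Fchain_hessenberg n X)) (imul_Emxr _ _ _ _ (Fchain_hessenberg n Y)).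
  by case: j {ji} => [|j] /= EX EY; rewrite /z; lra.
have zi0 : z i = 0 by rewrite /z !Fchain_diag subrr.
have [/eqP + z0] := alternating_recurrence_eq0 rec I_gt0
  (fun j ji => Fchain_sign W_ge0 ji) zi0 (Fchain_diag _ _ _ _).
rewrite subr_eq0 => /eqP I12; split=> // j.
have [ij|ji] := ltnP i j; first by rewrite !Fchain_trig.
by apply/eqP; rewrite -subr_eq0; apply/eqP; exact: z0.
Qed.

Lemma Fchain_peel n X Y B e :
  (forall k m, (k < n)%N -> (m < B)%N -> Y k m e != 0) ->
  (forall i j, (i <= B)%N -> Fchain n.+1 X i j e = Fchain n.+1 Y i j e) ->
  (forall i j, (i <= B)%N -> Fchain n X i j e = Fchain n Y i j e) /\
  (forall m, (m + n < B)%N -> X n m e = Y n m e).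
Proof.
move=> Y_neq0 eqXY.
have last_eq m : (m + n < B)%N ->
    (forall j, Fchain n X (m + n)%N j e = Fchain n Y (m + n)%N j e) -> X n m e = Y n m e.
  move=> mnB row; have := eqXY (m + n)%N.+1 m mnB.
  rewrite !FchainSE (Fchain_band X e (ltnSn (m + n)%N)) (Fchain_band Y e (ltnSn (m + n)%N)).
  rewrite ltnS leq_addl /= addnK row !sub0r => /oppr_inj.
  apply: mulIf; rewrite Fchain_corner mulf_neq0 ?signr_eq0 //.
  by apply/prodf_neq0 => k _; apply: Y_neq0; [exact: ltn_ord|lia].
have rows i : (i <= B)%N -> forall j, Fchain n X i j e = Fchain n Y i j e.
  elim: i => [|i IHi] iB j; first by have := eqXY 0%N j iB; rewrite !FchainSE !subr0.
  have := eqXY i.+1 j iB; rewrite !FchainSE /= (IHi (ltnW iB)).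
  have -> : (n < i.+1)%N = (n <= i)%N by [].
  case: leqP => ni; last by rewrite !subr0.
  rewrite (last_eq (i - n)%N) ?subnK //; first by move/addIr.
  by move=> j'; apply: IHi; exact: ltnW.
split=> [i j /rows //|m mnB].
by apply: last_eq => // j; apply: rows; exact: ltnW.
Qed.

Lemma Fchain_inj n X Y B e :
  (forall k m, (k < n)%N -> (m < B)%N -> Y k m e != 0) ->
  (forall i j, (i <= B)%N -> Fchain n X i j e = Fchain n Y i j e) ->
  forall k m, (k < n)%N -> (m + k < B)%N -> X k m e = Y k m e.
Proof.
elim: n => [|n IHn] Y_neq0 eqXY k m // kn mkB.
have Y_neq0' k' m' : (k' < n)%N -> (m' < B)%N -> Y k' m' e != 0.
  by move=> k'n; apply: Y_neq0; exact: ltnW.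
have [rows last_eq] := Fchain_peel Y_neq0' eqXY.
have [k_lt_n|n_le_k] := ltnP k n; first exact: IHn.
have k_eq_n : k = n by lia.
by rewrite k_eq_n in mkB *; exact: last_eq.
Qed.

Lemma Fchain_Emx_uniq n W X Y I I1 I2 :
  (forall k m, inM (W k m)) -> (forall m, inM (I m)) -> (forall k m, inM (Y k m)) ->
  imx_germ_eq (imul (Fchain n X) (Emx I)) (imul (Emx I1) (Fchain n W)) ->
  imx_germ_eq (imul (Fchain n Y) (Emx I)) (imul (Emx I2) (Fchain n W)) ->
  (forall i, germ_eq (I1 i) (I2 i)) /\
  (forall k m, (k < n)%N -> germ_eq (X k m) (Y k m)).
Proof.
move=> hW hI hY eqX eqY.
have rows i : \forall e \near (0:R)^'+,
    I1 i e = I2 i e /\ forall j, Fchain n X i j e = Fchain n Y i j e.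
  have W_gt0 : \forall e \near (0:R)^'+,
      forall k, (k < n)%N -> forall m, (m < i)%N -> 0 < W k m e.
    by apply: near_forall_lt => k _; apply: near_forall_lt => m _; exact: inM_gt0.
  have I_gt0 : \forall e \near (0:R)^'+, forall j, (j < i.+1)%N -> 0 < I j e.
    by apply: near_forall_lt => j _; exact: inM_gt0.
  have EXY : \forall e \near (0:R)^'+, forall j, (j < i.+1)%N ->
      imul (Fchain n X) (Emx I) i j e = imul (Emx I1) (Fchain n W) i j e /\
      imul (Fchain n Y) (Emx I) i j e = imul (Emx I2) (Fchain n W) i j e.
    by apply: near_forall_lt => j _; apply: filterS2 (eqX i j) (eqY i j) => e.
  apply: filterS3 W_gt0 I_gt0 EXY => e W_e I_e EXY_e.
  apply: Fchain_Emx_row_uniq => [k m kn mi|j ji|j ji|j ji].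
  - exact/ltW/W_e.
  - exact: I_e.
  - exact: (EXY_e j ji).1.
  - exact: (EXY_e j ji).2.
split=> [i|k m kn]; first by apply: filterS (rows i) => e [].
pose B := (m + k)%N.+1.
have Y_gt0 : \forall e \near (0:R)^'+,
    forall k, (k < n)%N -> forall m, (m < B)%N -> 0 < Y k m e.
  by apply: near_forall_lt => k' _; apply: near_forall_lt => m' _; exact: inM_gt0.
have rows_B : \forall e \near (0:R)^'+,
    forall i, (i < B.+1)%N -> forall j, Fchain n X i j e = Fchain n Y i j e.
  by apply: near_forall_lt => i _; apply: filterS (rows i) => e [].
apply: filterS2 Y_gt0 rows_B => e Y_e rows_e.
apply: (@Fchain_inj n X Y B e _ _ k m kn (ltnSn _)) => [k' m' k'n m'B|i j iB].
- by rewrite gt_eqF // Y_e.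
- exact: rows_e.
Qed.

End Uniqueness.

Section Expressions.
Variable V : Type.

Definition sf_exchE a (J W : nat -> sfexpr V) i : sfexpr V :=
  if (i < a)%N then J i else if i == a then SAdd (J a) (W 0%N)
  else SMul (SMul (SAdd (J i) (W (i - a)%N)) (J i.-1))
            (SInv (SAdd (J i.-1) (W (i.-1 - a)%N))).

Definition sf_exchF a (J W : nat -> sfexpr V) m : sfexpr V :=
  SMul (SMul (SAdd (J (a + m)%N.+1) (W m.+1)) (W m)) (SInv (SAdd (J (a + m)%N) (W m))).

Variable R : realType.
Variable env : V -> R -> R.

Lemma sfeval_exchE a J W i :
  sfeval env (sf_exchE a J W i) =
  exchE a (fun m => sfeval env (J m)) (fun m => sfeval env (W m)) i.
Proof. by rewrite /sf_exchE /exchE; case: (i < a)%N => //; case: (i == a). Qed.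

Lemma sfeval_exchF a J W m :
  sfeval env (sf_exchF a J W m) =
  exchF a (fun m => sfeval env (J m)) (fun m => sfeval env (W m)) m.
Proof. by []. Qed.

End Expressions.

Definition sf_U N k m : sfexpr (pvar N) := SVar (inl (inord k, m)).

Fixpoint sf_Ipush N k : nat -> sfexpr (pvar N) :=
  if k is k'.+1 then sf_exchE k' (sf_Ipush N k') (sf_U N k') else fun i => SVar (inr i).

Definition sf_Upush N k : nat -> sfexpr (pvar N) := sf_exchF k (sf_Ipush N k) (sf_U N k).

Lemma sfeval_Ipush (R : realType) N (U : 'I_N.+1 -> nat -> R -> R) I k :
  (fun i => sfeval (penv U I) (sf_Ipush N k i)) = Ipush (fun k => U (inord k)) I k.
Proof. by elim: k => [|k IHk] //=; apply: funext => i; rewrite sfeval_exchE IHk. Qed.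

Lemma sfeval_Upush (R : realType) N (U : 'I_N.+1 -> nat -> R -> R) I k m :
  sfeval (penv U I) (sf_Upush N k m) = Upush (fun k => U (inord k)) I k m.
Proof. by rewrite sfeval_exchF sfeval_Ipush. Qed.

Theorem proposition3p6 (R : realType) (N : nat) :
  exists (eU : 'I_N.+1 -> nat -> sfexpr (pvar N)) (eI : nat -> sfexpr (pvar N)),
  forall (U : 'I_N.+1 -> nat -> R -> R) (I : nat -> R -> R),
    (forall a k, inM (U a k)) -> (forall k, inM (I k)) ->
    let U' := fun a k => sfeval (penv U I) (eU a k) in
    let I' := fun k => sfeval (penv U I) (eI k) in
    is_solution U I U' I' /\
    (forall (U'' : 'I_N.+1 -> nat -> R -> R) (I'' : nat -> R -> R),
       is_solution U I U'' I'' ->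
       (forall a k, germ_eq (U'' a k) (U' a k)) /\
       (forall k, germ_eq (I'' k) (I' k))).
Proof.
exists (fun a => sf_Upush N a), (sf_Ipush N N.+1) => U I hU hI U' I'.
pose W k := U (inord k).
have hW k m : inM (W k m) by exact: hU.
have henv v : inM (penv U I v) by case: v => [[a k]|k]; [exact: hU|exact: hI].
have U'E a : U' a = Upush W I a by apply: funext => m; exact: sfeval_Upush.
have I'E : I' = Ipush W I N.+1 by exact: sfeval_Ipush.
have FprodU' : Fprod U' = Fchain N.+1 (Upush W I).
  by rewrite Fprod_Fchain; apply: eq_Fchain => k kN; rewrite U'E inordK.
have push := Fchain_Emx_push N.+1 hW hI.
split.
  split=> [a k|k|]; [exact: inM_sfeval|exact: inM_sfeval|].
  by rewrite FprodU' Fprod_Fchain I'E.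
move=> U'' I'' [_ _]; rewrite !Fprod_Fchain => eq''.
have [eqI eqU] := Fchain_Emx_uniq hW hI (inM_Upush hW hI) eq'' push.
split=> [a k|k]; last by rewrite I'E; exact: eqI.
by have := eqU a k (ltn_ord a); rewrite inord_val U'E.
Qed.
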